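(* In the M/M/1 setting below, if $\mathbb{E}[W(q^S_s\Lambda)]=W(q^S_s\lambda)$, then $q^S_m\le q^S_s\le q^S_e$.
   Context: Setting: an M/M/1 queue with true (deterministic) Poisson arrival rate $\lambda>0$ and exponential service times with rate $\mu$, so the expected time in system at effective arrival rate $x\in[0,\mu)$ is $W(x)=1/(\mu-x)$. Each served customer receives reward $R$ and incurs waiting cost $C>0$ per unit time, with $R\ge C/\mu$. Customers' beliefs about the arrival rate are described by a non-degenerate nonnegative random variable $\Lambda$ whose support has minimum $\lambda_{\min}$ and maximum $\lambda_{\max}$, with $0\le\lambda_{\min}<\lambda<\lambda_{\max}<\mu$. For $q\in[0,1]$: $\mathrm{Rev}^S(q)=q\lambda\,\mathbb{E}[R-C\,W(q\Lambda)]$ and $\mathrm{SW}^S(q)=q\lambda\,(R-C\,W(q\lambda))$, both strictly concave on $[0,1]$; $q^S_m$ is the maximizer of $\mathrm{Rev}^S$ over $[0,1]$ and $q^S_s$ is the maximizer of $\mathrm{SW}^S$ over $[0,1]$. The individual (no-fee) equilibrium $q^S_e$: if $R-C\,\mathbb{E}[W(\Lambda)]\ge0$ then $q^S_e=1$; otherwise $q^S_e$ is the unique $q\in[0,1]$ with $C\,\mathbb{E}[W(q\Lambda)]=R$. *)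

From HB Require Import structures.
From mathcomp Require Import all_boot all_order all_algebra.
From mathcomp Require Import all_classical all_reals all_analysis.
Set Implicit Arguments. Unset Strict Implicit. Unset Printing Implicit Defensive.
Import Order.TTheory GRing.Theory Num.Theory.
Local Open Scope classical_set_scope.
Local Open Scope ring_scope.

Section MM1.
Context {d : measure_display} {T : measurableType d} {R : realType}.

(* expected time in system at effective arrival rate x *)
Definition Wt (mu x : R) : R := (mu - x)^-1.

Definition EW (P : probability T R) (Lam : T -> R) (mu q : R) : R :=
  fine ('E_P[fun w => Wt mu (q * Lam w)])%E.

Definition RevS (P : probability T R) (Lam : T -> R) (lam mu Rw C q : R) : R :=
  q * lam * fine ('E_P[fun w => (Rw - C * Wt mu (q * Lam w))%R])%E.

End MM1.

Definition SWS {R : realType} (lam mu Rw C q : R) : R :=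
  q * lam * (Rw - C * Wt mu (q * lam)).

Definition is_max01 {R : realType} (f : R -> R) (x : R) : Prop :=
  0 <= x <= 1 /\ forall q, 0 <= q <= 1 -> f q <= f x.

(* individual (no-fee) equilibrium *)
Definition is_eq_S {d} {T : measurableType d} {R : realType}
  (P : probability T R) (Lam : T -> R) (mu Rw C qe : R) : Prop :=
  (0 <= Rw - C * EW P Lam mu 1 /\ qe = 1) \/
  (Rw - C * EW P Lam mu 1 < 0 /\ 0 <= qe <= 1 /\ C * EW P Lam mu qe = Rw).

(* the support of the law of Lam has minimum lmin and maximum lmax *)
Definition support_min_max {d} {T : measurableType d} {R : realType}
  (P : probability T R) (Lam : T -> R) (lmin lmax : R) : Prop :=
  P (Lam @^-1` `[lmin, lmax]) = 1%E /\
  (forall e : R, 0 < e -> (0 < P (Lam @^-1` `[lmin, (lmin + e)%R[))%E) /\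
  (forall e : R, 0 < e -> (0 < P (Lam @^-1` `](lmax - e)%R, lmax]))%E).

(* Write W_q for W(q Lambda) and u = mu - qs lam, so the hypothesis reads E[W_qs] = 1/u.
   Since b W(bx) - a W(ax) = mu (b - a) W(ax) W(bx), revenue and welfare differences factor as
     Rev(b) - Rev(a) = lam (b - a) (R - C mu E[W_a W_b]),
     SW(b) - SW(a)   = lam (b - a) (R - C mu W(a lam) W(b lam)).
   If qs < 1, letting b decrease to qs gives R <= C mu / u^2; for b > qs, Jensen's inequality and
   the strict growth of W give E[W_qs W_b] > E[W_qs]^2 = 1/u^2, so Rev(b) < Rev(qs) and qm <= qs.
   If qs > 0, comparing SW(qs) with SW(qs/2) gives R > C / u = C E[W_qs], while an interior
   equilibrium has C E[W_qe] = R; monotonicity of q |-> E[W_q] then forces qs <= qe. *)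

From HB Require Import structures.
From mathcomp Require Import all_boot all_order all_algebra.
From mathcomp Require Import all_classical all_reals all_analysis.
From mathcomp Require Import measurable_realfun ring lra.
Set Implicit Arguments. Unset Strict Implicit. Unset Printing Implicit Defensive.
Import Order.TTheory GRing.Theory Num.Theory.
Local Open Scope classical_set_scope.
Local Open Scope ring_scope.

Lemma measurable_inv (R : realType) : measurable_fun [set: R] (@GRing.inv R).
Proof.
have -> : [set: R] = ~` [set 0] `|` [set 0].
  apply/seteqP; split => x //= _.
  by case: (eqVneq x 0) => [|/eqP]; [right | left].
apply/measurable_funU; last split.
- by apply: measurableC; exact: measurable_set1.
- exact: measurable_set1.
2: exact: measurable_fun_set1.
apply: open_continuous_measurable_fun.
  have -> : ~` [set (0 : R)] = [set x | x != 0].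
    by apply/seteqP; split => x /= /eqP.
  exact: open_neq.
by move=> x; rewrite inE /= => /eqP x0; apply: inv_continuous.
Qed.

Lemma ler_of_small_linear (R : realFieldType) (x y k delta : R) : 0 < delta ->
  (forall t, 0 < t -> t <= delta -> x <= y + k * t) -> x <= y.
Proof.
move=> delta0 small; apply/ler_addgt0Pr => e e0.
have k1 : 0 < `|k| + 1 by rewrite ltr_wpDl.
set t := Num.min delta (e / (`|k| + 1)).
have t0 : 0 < t by rewrite lt_min delta0 divr_gt0.
have t_le : t <= delta by rewrite ge_min lexx.
apply: (le_trans (small t t0 t_le)); rewrite lerD2l.
apply: (le_trans (ler_norm _)); rewrite normrM (gtr0_norm t0).
apply: (@le_trans _ _ ((`|k| + 1) * (e / (`|k| + 1)))).
  by rewrite ler_pM ?lerDl ?ge_min ?lexx ?orbT // ltW.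
by rewrite mulrC divfK // lt0r_neq0.
Qed.

Section bounded_expectation.
Context d (T : measurableType d) (R : realType) (P : probability T R).

Definition bounded_measurable (X : T -> R) :=
  measurable_fun [set: T] X /\ exists M : R, forall w, `|X w| <= M.

Definition Ex (X : T -> R) : R := fine ('E_P[X])%E.

Lemma bounded_measurable_Lfun1 X : bounded_measurable X -> X \in Lfun P 1.
Proof.
move=> [mX [M XM]]; apply/Lfun1_integrable/integrableP; split.
  exact/measurable_EFinP.
apply: (@le_lt_trans _ _ ((Num.max M 0)%:E * P setT)%E).
  apply: integral_le_bound => //; first exact/measurable_EFinP.
    by rewrite lee_fin le_max lexx orbT.
  by apply: aeW => w _ /=; rewrite lee_fin le_max XM.
by rewrite probability_setT mule1 ltry.
Qed.

Lemma ExE X : bounded_measurable X -> ('E_P[X] = (Ex X)%:E)%E.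
Proof.
by move=> bX; rewrite fineK // expectation_fin_num // bounded_measurable_Lfun1.
Qed.

Lemma ExD X Y : bounded_measurable X -> bounded_measurable Y ->
  Ex (X \+ Y) = Ex X + Ex Y.
Proof.
move=> bX bY.
by rewrite /Ex expectationD ?bounded_measurable_Lfun1 // (ExE bX) (ExE bY).
Qed.

Lemma ExB X Y : bounded_measurable X -> bounded_measurable Y ->
  Ex (X \- Y) = Ex X - Ex Y.
Proof.
move=> bX bY.
by rewrite /Ex expectationB ?bounded_measurable_Lfun1 // (ExE bX) (ExE bY).
Qed.

Lemma ExZ X k : bounded_measurable X -> Ex (k \o* X) = k * Ex X.
Proof.
by move=> bX; rewrite /Ex expectationZl ?bounded_measurable_Lfun1 // (ExE bX).
Qed.

Lemma Ex_cst c : Ex (cst c) = c.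
Proof. by rewrite /Ex expectation_cst. Qed.

Lemma Ex_ge0 X : (forall w, 0 <= X w) -> 0 <= Ex X.
Proof. by move=> X0; apply/fine_ge0/expectation_ge0. Qed.

Lemma bounded_measurable_cst c : bounded_measurable (cst c).
Proof. by split; [exact: measurable_cst | exists `|c|]. Qed.

Lemma bounded_measurableD X Y : bounded_measurable X -> bounded_measurable Y ->
  bounded_measurable (X \+ Y).
Proof.
move=> [mX [M XM]] [mY [N YN]]; split; first exact: measurable_funD.
by exists (M + N) => w; rewrite (le_trans (ler_normD _ _)) ?lerD.
Qed.

Lemma bounded_measurableB X Y : bounded_measurable X -> bounded_measurable Y ->
  bounded_measurable (X \- Y).
Proof.
move=> [mX [M XM]] [mY [N YN]]; split; first exact: measurable_funB.
by exists (M + N) => w; rewrite (le_trans (ler_normB _ _)) ?lerD.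
Qed.

Lemma bounded_measurableM X Y : bounded_measurable X -> bounded_measurable Y ->
  bounded_measurable (X \* Y).
Proof.
move=> [mX [M XM]] [mY [N YN]]; split; first exact: measurable_funM.
by exists (M * N) => w /=; rewrite normrM ler_pM.
Qed.

Lemma bounded_measurableZ X k : bounded_measurable X ->
  bounded_measurable (k \o* X).
Proof.
move=> [mX [M XM]]; split; first exact: measurable_funM.
by exists (`|k| * M) => w /=; rewrite normrM mulrC ler_wpM2l.
Qed.

Lemma Ex_le X Y : bounded_measurable X -> bounded_measurable Y ->
  (forall w, X w <= Y w) -> Ex X <= Ex Y.
Proof.
move=> bX bY XY; rewrite -subr_ge0 -ExB //.
by apply: Ex_ge0 => w /=; rewrite subr_ge0.
Qed.

Lemma Ex_sqr_le X : bounded_measurable X -> Ex X ^+ 2 <= Ex (X \* X).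
Proof.
move=> bX; set c := Ex X.
have bXX := bounded_measurableM bX bX.
have bcX : bounded_measurable (2 * c \o* X) by exact: bounded_measurableZ.
have := Ex_ge0 (fun w => sqr_ge0 (X w - c)).
have -> : (fun w => (X w - c) ^+ 2) = (X \* X \- 2 * c \o* X) \+ cst (c ^+ 2).
  by apply/funext => w /=; ring.
rewrite ExD; last 2 first.
- exact: bounded_measurableB.
- exact: bounded_measurable_cst.
rewrite ExB // ExZ // Ex_cst -/c; nra.
Qed.

End bounded_expectation.

Section sojourn_time.
Variables (R : realType) (mu : R).

Lemma WtB x y : mu - x != 0 -> mu - y != 0 ->
  Wt mu y - Wt mu x = (y - x) * (Wt mu x * Wt mu y).
Proof. by move=> hx hy; rewrite /Wt; field; rewrite hx hy. Qed.

Lemma Wt_mulB a b x : mu - a * x != 0 -> mu - b * x != 0 ->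
  b * Wt mu (b * x) - a * Wt mu (a * x) =
  mu * (b - a) * (Wt mu (a * x) * Wt mu (b * x)).
Proof. by move=> ha hb; rewrite /Wt; field; rewrite ha hb. Qed.

End sojourn_time.

Section welfare_maximizer.
Variables (R : realType) (lam mu Rw C : R).
Hypotheses (lam_gt0 : 0 < lam) (lam_lt_mu : lam < mu).

Let den_gt0 q : q <= 1 -> 0 < mu - q * lam.
Proof. by move=> q1; rewrite subr_gt0 (le_lt_trans _ lam_lt_mu) // ler_piMl // ltW. Qed.

Lemma SWS_sub a b : a <= 1 -> b <= 1 ->
  SWS lam mu Rw C b - SWS lam mu Rw C a =
  lam * (b - a) * (Rw - C * mu * (Wt mu (a * lam) * Wt mu (b * lam))).
Proof.
move=> a1 b1; have e := Wt_mulB (lt0r_neq0 (den_gt0 a1)) (lt0r_neq0 (den_gt0 b1)).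
rewrite /SWS; transitivity
  (lam * ((b - a) * Rw - C * (b * Wt mu (b * lam) - a * Wt mu (a * lam)))).
  by ring.
by rewrite e; ring.
Qed.

Lemma SWS_max_marginal a : is_max01 (SWS lam mu Rw C) a -> a < 1 ->
  Rw <= C * mu * Wt mu (a * lam) ^+ 2.
Proof.
move=> [/andP[a0 a1] amax] a_lt1; set u := mu - a * lam.
have u0 : 0 < u := den_gt0 a1.
have marginal b : a < b -> b <= 1 -> Rw * u * (mu - b * lam) <= C * mu.
  move=> ab b1; have v0 := den_gt0 b1.
  have := amax b; rewrite (le_trans a0 (ltW ab)) b1 => /(_ isT).
  rewrite -subr_le0 SWS_sub // pmulr_rle0 ?mulr_gt0 ?subr_gt0 // subr_le0.
  by rewrite /Wt -/u -invfM ler_pdivlMr ?mulr_gt0 // mulrA.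
rewrite /Wt -/u exprVn ler_pdivlMr ?exprn_gt0 //.
have gap : 0 < 1 - a by rewrite subr_gt0.
apply: (ler_of_small_linear (k := Rw * u * lam) gap) => t t0 t1.
have := @marginal (a + t); rewrite ltrDl t0 => /(_ isT); rewrite -lerBrDl t1.
have -> : mu - (a + t) * lam = u - t * lam by rewrite /u; ring.
by move=> /(_ isT); rewrite expr2; nra.
Qed.

Lemma SWS_max_pos a : 0 < C -> is_max01 (SWS lam mu Rw C) a -> 0 < a ->
  C * Wt mu (a * lam) < Rw.
Proof.
move=> C0 [/andP[a0 a1] amax] a_gt0.
have h1 : a / 2 <= 1 by lra.
have := amax (a / 2); rewrite h1 andbT divr_ge0 // => /(_ isT).
rewrite -subr_ge0 SWS_sub // pmulr_rge0; last by rewrite mulr_gt0 // subr_gt0; lra.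
rewrite subr_ge0 => /(lt_le_trans _); apply.
have Wa0 : 0 < Wt mu (a * lam) by rewrite invr_gt0 den_gt0.
rewrite -mulrA ltr_pM2l // mulrA -[X in X < _]mul1r ltr_pM2r //.
rewrite ltr_pdivlMr ?den_gt0 // mul1r ltrBlDr ltrDl.
by rewrite !mulr_gt0.
Qed.

End welfare_maximizer.

Lemma measurable_Wt (R : realType) (mu q : R) :
  measurable_fun [set: R] (fun x => Wt mu (q * x)).
Proof.
rewrite (_ : (fun x => _) = GRing.inv \o (fun x => mu - q * x)) //.
apply: measurableT_comp; first exact: measurable_inv.
by apply: measurable_funB => //; exact: measurable_funM.
Qed.

Section clamped_arrival_rate.
Context d (T : measurableType d) (R : realType) (P : probability T R).
Variables (Lam : {RV P >-> R}) (mu lmin lmax : R).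
Hypotheses (Lam_ge0 : forall w, 0 <= Lam w) (lmax_gt0 : 0 < lmax).
Hypothesis lmax_lt_mu : lmax < mu.
Hypothesis Lam_supp : P (Lam @^-1` `[lmin, lmax]) = 1%E.
Hypothesis Lam_max :
  forall e : R, 0 < e -> (0 < P (Lam @^-1` `](lmax - e)%R, lmax]))%E.

(* Lam may be unbounded off its support; clamping it at lmax changes it only on
   a null set and makes every expectation below one of a bounded function. *)
Definition Lamc w := Num.min (Lam w) lmax.

Definition Wc q w := Wt mu (q * Lamc w).

Lemma Lamc_ge0 w : 0 <= Lamc w.
Proof. by rewrite le_min Lam_ge0 ltW. Qed.

Lemma Lamc_le w : Lamc w <= lmax.
Proof. by rewrite ge_min lexx orbT. Qed.

Lemma measurable_Lamc : measurable_fun [set: T] Lamc.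
Proof. exact/measurable_minr/measurable_cst/measurable_funPT. Qed.

Lemma bounded_measurable_Lamc : bounded_measurable Lamc.
Proof.
split; first exact: measurable_Lamc.
by exists lmax => w; rewrite ger0_norm ?Lamc_ge0 ?Lamc_le.
Qed.

Lemma Ex_comp_Lamc (h : R -> R) : measurable_fun [set: R] h ->
  Ex P (h \o Lam) = Ex P (h \o Lamc).
Proof.
move=> mh; rewrite /Ex unlock; congr fine.
have mA : measurable (Lam @^-1` `[lmin, lmax]).
  exact: measurable_funPTI (measurable_itv _).
apply: ae_eq_integral => //.
- exact/measurable_EFinP/measurableT_comp/measurable_funPT.
- exact/measurable_EFinP/measurableT_comp/measurable_Lamc.
exists (~` (Lam @^-1` `[lmin, lmax])); split.
- exact: measurableC.
- by have := probability_setC P mA; rewrite Lam_supp subee.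
- move=> w /= hw hin; apply: hw => _ /=.
  by move: hin; rewrite /= in_itv /= => /andP[_ Lw]; rewrite /Lamc min_l.
Qed.

Lemma Ex_Lamc_gt0 : 0 < Ex P Lamc.
Proof.
pose A := Lam @^-1` `](lmax - lmax / 2), lmax].
have mA : measurable A by exact: measurable_funPTI (measurable_itv _).
have bA : bounded_measurable (\1_A : T -> R).
  split; first exact: measurable_indic.
  by exists 1 => w; rewrite indicE; case: (w \in A); rewrite ?normr1 ?normr0.
have PA : 0 < Ex P (\1_A : T -> R).
  rewrite /Ex expectation_indic //; apply: fine_gt0.
  rewrite Lam_max ?divr_gt0 //=.
  by rewrite (le_lt_trans (probability_le1 P mA)) ?ltry.
apply: (@lt_le_trans _ _ (lmax / 2 * Ex P (\1_A : T -> R))).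
  by rewrite mulr_gt0 ?divr_gt0.
rewrite -ExZ //; apply: Ex_le.
- exact: bounded_measurableZ.
- exact: bounded_measurable_Lamc.
move=> w /=; rewrite indicE; case: (boolP (w \in A)) => [|_].
  rewrite inE /A /= in_itv /= => /andP[h1 _].
  rewrite mul1r /Lamc le_min; apply/andP; split.
  - by apply: (le_trans _ (ltW h1)); lra.
  - by rewrite ler_pdivrMr // ler_pMr // ler1n.
by rewrite mul0r Lamc_ge0.
Qed.

Lemma Wc_den_ge q w : 0 <= q <= 1 -> mu - lmax <= mu - q * Lamc w.
Proof.
move=> /andP[q0 q1]; rewrite lerD2l lerN2 (le_trans _ (Lamc_le w)) //.
by rewrite ler_piMl ?Lamc_ge0.
Qed.

Lemma Wc_den_gt0 q w : 0 <= q <= 1 -> 0 < mu - q * Lamc w.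
Proof. by move=> q01; rewrite (lt_le_trans _ (Wc_den_ge w q01)) ?subr_gt0. Qed.

Lemma Wc_ge q w : 0 <= q <= 1 -> mu^-1 <= Wc q w.
Proof.
move=> q01; rewrite /Wc /Wt lef_pV2 ?posrE ?Wc_den_gt0 ?(lt_trans lmax_gt0) //.
by rewrite gerBl mulr_ge0 ?Lamc_ge0 //; case/andP: q01.
Qed.

Lemma bounded_measurable_Wc q : 0 <= q <= 1 -> bounded_measurable (Wc q).
Proof.
move=> q01; split.
  exact/(measurableT_comp (measurable_Wt mu q))/measurable_Lamc.
exists (mu - lmax)^-1 => w; have w0 := Wc_den_gt0 w q01.
rewrite /Wc /Wt ger0_norm ?invr_ge0 ?(ltW w0) //.
by rewrite lef_pV2 ?posrE ?w0 ?subr_gt0 // Wc_den_ge.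
Qed.

Lemma Ex_Wc_le a b : 0 <= a -> a <= b -> b <= 1 -> Ex P (Wc a) <= Ex P (Wc b).
Proof.
move=> a0 ab b1.
have a01 : 0 <= a <= 1 by rewrite a0 (le_trans ab b1).
have b01 : 0 <= b <= 1 by rewrite b1 (le_trans a0 ab).
apply: Ex_le; [exact: bounded_measurable_Wc | exact: bounded_measurable_Wc |].
move=> w; rewrite /Wc /Wt lef_pV2 ?posrE ?Wc_den_gt0 // lerD2l lerN2.
by rewrite ler_wpM2r ?Lamc_ge0.
Qed.

Lemma EW_Wc q : EW P Lam mu q = Ex P (Wc q).
Proof. exact: (Ex_comp_Lamc (measurable_Wt mu q)). Qed.

Lemma RevS_Wc lam Rw C q : 0 <= q <= 1 ->
  RevS P Lam lam mu Rw C q = q * lam * (Rw - C * Ex P (Wc q)).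
Proof.
move=> q01; rewrite /RevS; congr (_ * _).
have mh : measurable_fun [set: R] (fun x => Rw - C * Wt mu (q * x)).
  by apply: measurable_funB => //; apply: measurable_funM => //; exact: measurable_Wt.
have := Ex_comp_Lamc mh; rewrite /Ex/= => ->.
rewrite (_ : _ \o Lamc = cst Rw \- C \o* Wc q); last first.
  by apply/funext => x /=; rewrite mulrC.
have bW := bounded_measurable_Wc q01.
rewrite -/(Ex P _) -/(Ex P (Wc q)) ExB ?ExZ ?Ex_cst //.
- exact: bounded_measurable_cst.
- exact: bounded_measurableZ.
Qed.

Lemma Wc_mul_ge a b w : 0 <= a -> a <= b -> b <= 1 ->
  Wc a w * Wc a w + (b - a) * mu^-1 ^+ 3 * Lamc w <= Wc a w * Wc b w.
Proof.
move=> a0 ab b1.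
have a01 : 0 <= a <= 1 by rewrite a0 (le_trans ab b1).
have b01 : 0 <= b <= 1 by rewrite b1 (le_trans a0 ab).
have WcB : Wc b w - Wc a w = (b - a) * Lamc w * (Wc a w * Wc b w).
  by rewrite /Wc WtB ?lt0r_neq0 ?Wc_den_gt0 //; congr (_ * _); ring.
have m3 : mu^-1 ^+ 3 <= Wc a w * Wc a w * Wc b w.
  have m0 : 0 <= mu^-1 by rewrite invr_ge0 ltW // (lt_trans lmax_gt0).
  by rewrite !exprS expr0 mulr1 mulrA !ler_pM ?Wc_ge // mulr_ge0.
have bL : 0 <= (b - a) * Lamc w by rewrite mulr_ge0 ?subr_ge0 ?Lamc_ge0.
have := ler_wpM2l bL m3.
have : Wc a w * Wc b w - Wc a w * Wc a w =
    (b - a) * Lamc w * (Wc a w * Wc a w * Wc b w).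
  by rewrite -mulrBr WcB; ring.
nra.
Qed.

Lemma Ex_Wc_mul_gt a b : 0 <= a -> a < b -> b <= 1 ->
  Ex P (Wc a) ^+ 2 < Ex P (Wc a \* Wc b).
Proof.
move=> a0 ab b1.
have a01 : 0 <= a <= 1 by rewrite a0 (le_trans (ltW ab) b1).
have b01 : 0 <= b <= 1 by rewrite b1 (le_trans a0 (ltW ab)).
have bWa := bounded_measurable_Wc a01; have bWb := bounded_measurable_Wc b01.
have bL : bounded_measurable ((b - a) * mu^-1 ^+ 3 \o* Lamc).
  exact/bounded_measurableZ/bounded_measurable_Lamc.
have k0 : 0 < (b - a) * mu^-1 ^+ 3.
  by rewrite mulr_gt0 ?subr_gt0 // exprn_gt0 // invr_gt0 (lt_trans lmax_gt0).
apply: (le_lt_trans (Ex_sqr_le P bWa)).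
apply: (lt_le_trans _ (Ex_le P (bounded_measurableD (bounded_measurableM bWa bWa) bL)
  (bounded_measurableM bWa bWb) _)); last first.
  by move=> w /=; rewrite [Lamc w * _]mulrC; exact: Wc_mul_ge (ltW ab) b1.
rewrite ExD; [|exact: bounded_measurableM | exact: bL].
rewrite ExZ ?ltrDl; last exact: bounded_measurable_Lamc.
exact: mulr_gt0 k0 Ex_Lamc_gt0.
Qed.

Lemma RevS_sub lam Rw C a b : 0 <= a -> a <= b -> b <= 1 ->
  RevS P Lam lam mu Rw C b - RevS P Lam lam mu Rw C a =
  lam * (b - a) * (Rw - C * mu * Ex P (Wc a \* Wc b)).
Proof.
move=> a0 ab b1.
have a01 : 0 <= a <= 1 by rewrite a0 (le_trans ab b1).
have b01 : 0 <= b <= 1 by rewrite b1 (le_trans a0 ab).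
have bWa := bounded_measurable_Wc a01; have bWb := bounded_measurable_Wc b01.
have EWcB : b * Ex P (Wc b) - a * Ex P (Wc a) = mu * (b - a) * Ex P (Wc a \* Wc b).
  have bZb : bounded_measurable (b \o* Wc b) by exact: bounded_measurableZ.
  have bZa : bounded_measurable (a \o* Wc a) by exact: bounded_measurableZ.
  rewrite -!ExZ //; last exact: bounded_measurableM.
  rewrite -ExB //.
  congr (Ex P _); apply/funext => w /=; rewrite (mulrC (Wc b w)) (mulrC (Wc a w)).
  by rewrite Wt_mulB ?lt0r_neq0 ?Wc_den_gt0 // mulrC.
rewrite !RevS_Wc //; transitivity
  (lam * ((b - a) * Rw - C * (b * Ex P (Wc b) - a * Ex P (Wc a)))); first ring.
by rewrite EWcB; ring.
Qed.

Lemma RevS_lt lam Rw C a b : 0 < lam -> 0 < C -> 0 <= a -> a < b -> b <= 1 ->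
  Ex P (Wc a) = Wt mu (a * lam) -> Rw <= C * mu * Wt mu (a * lam) ^+ 2 ->
  RevS P Lam lam mu Rw C b < RevS P Lam lam mu Rw C a.
Proof.
move=> lam0 C0 a0 ab b1 EWa Rw_le.
have mu0 : 0 < mu by rewrite (lt_trans lmax_gt0).
rewrite -subr_lt0 (RevS_sub lam Rw C a0 (ltW ab) b1) pmulr_rlt0 ?mulr_gt0 ?subr_gt0 // subr_lt0.
by rewrite (le_lt_trans Rw_le) // ltr_pM2l ?mulr_gt0 // -EWa Ex_Wc_mul_gt.
Qed.

End clamped_arrival_rate.

Unset Implicit Arguments.

Theorem theorem1 (d : measure_display) (T : measurableType d) (R : realType)
  (P : probability T R) (Lam : {RV P >-> R})
  (lam mu Rw C lmin lmax qm qs qe : R) :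
  0 < lam -> 0 < C -> C / mu <= Rw ->
  0 <= lmin -> lmin < lam -> lam < lmax -> lmax < mu ->
  (forall w, 0 <= Lam w) ->
  ~ (exists c : R, P (Lam @^-1` [set c]) = 1%E) ->
  support_min_max P Lam lmin lmax ->
  is_max01 (RevS P Lam lam mu Rw C) qm ->
  is_max01 (SWS lam mu Rw C) qs ->
  is_eq_S P Lam mu Rw C qe ->
  EW P Lam mu qs = Wt mu (qs * lam) ->
  qm <= qs <= qe.
Proof.
(* Only the upper end lmax of the support enters. *)
move=> lam0 C0 _ _ _ lam_lmax lmax_mu Lam0 _ [supp [_ supp_max]]
  [/andP[qm0 qm1] qm_max] qs_max qe_eq EWqs.
have lmax0 : 0 < lmax by rewrite (lt_trans lam0).
have lam_mu : lam < mu by rewrite (lt_trans lam_lmax).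
have [/andP[qs0 qs1] _] := qs_max.
rewrite (EW_Wc mu supp) in EWqs.
apply/andP; split.
- rewrite leNgt; apply/negP => qs_qm.
  have := qm_max qs; rewrite qs0 qs1 => /(_ isT); apply/negP; rewrite -ltNge.
  apply: (RevS_lt Lam0 lmax0 lmax_mu supp supp_max) => //.
  exact: SWS_max_marginal (lt_le_trans qs_qm qm1).
- case: qe_eq => [[_ ->] // | [_ [/andP[qe0 _] Ce]]].
  rewrite leNgt; apply/negP => qe_qs.
  have := SWS_max_pos lam0 lam_mu C0 qs_max (le_lt_trans qe0 qe_qs).
  rewrite -EWqs -Ce (EW_Wc mu supp) ltr_pM2l // ltNge.
  by rewrite (Ex_Wc_le Lam0 lmax0 lmax_mu qe0 (ltW qe_qs) qs1).
Qed.
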